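(* Let $(G,\mathcal{B},\mu,\mathcal{B}_2,\mu_2)$ be an infinite probability group, $\mathcal{H}$ a Hilbert space, and $(e_g)_{g\in G}$ a norm-bounded family in $\mathcal{H}$ such that $(g,h)\mapsto\langle e_g,e_h\rangle$ is measurable as a function on $(G^2,\mathcal{B}_2)$. If for $\mu$-almost every $h\in G$, for $\mu$-almost every $g\in G$, $\langle e_g,e_{gh}\rangle=0$, then for every $f\in\mathcal{H}$, $\langle f,e_g\rangle=0$ for $\mu$-almost every $g\in G$.
   Context: A probability group is a tuple $(G, \mathcal{B}, \mu, \mathcal{B}_2, \mu_2)$ where $G$ is a group, $\mathcal{B}$ and $\mathcal{B}_2$ are $\sigma$-algebras on $G$ and $G^2$ respectively with $\mathcal{B}_2 \supseteq \mathcal{B}\times\mathcal{B}$, $\mu,\mu_2$ are probability measures on $\mathcal{B},\mathcal{B}_2$ with $\mu_2|_{\mathcal{B}\times\mathcal{B}} = \mu\times\mu$, such that: (i) multiplication $(G^2,\mathcal{B}_2)\to(G,\mathcal{B})$ is measurable; (ii) inversion is $\mathcal{B}$-measurable; (iii) $\mu$ is invariant under left translations, right translations and inversion; (iv) Fubini's theorem holds for every $\mathcal{B}_2$-measurable $f:G^2\to\mathbb{R}$: all sections $f(g,\cdot)$, $f(\cdot,g)$ are $\mathcal{B}$-measurable, the partial integrals $g\mapsto\int f(g,h)d\mu(h)$, $g\mapsto\int f(h,g)d\mu(h)$ are $\mathcal{B}$-measurable, and both iterated integrals equal $\int_{G^2} f\,d\mu_2$. ''For $\mu$-almost every $g$,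 $P(g)$'' means the set where $P$ fails is contained in a $\mu$-null set of $\mathcal{B}$. *)

From HB Require Import structures.
From mathcomp Require Import all_boot all_order all_algebra.
From mathcomp Require Import all_classical all_reals all_analysis measurable_realfun.
From mathcomp Require Import complex.
Set Implicit Arguments. Unset Strict Implicit. Unset Printing Implicit Defensive.
Import Order.TTheory GRing.Theory Num.Theory.
Local Open Scope ring_scope.

Definition is_group (G : Type) (mul : G -> G -> G) (inv : G -> G) (one : G) : Prop :=
  [/\ forall x y z, mul x (mul y z) = mul (mul x y) z,
      forall x, mul one x = x /\ mul x one = x
    & forall x, mul (inv x) x = one /\ mul x (inv x) = one].

Record hilbert_space (R : realType) := HilbertSpace {
  hcarrier :> lmodType R[i];
  hinner : hcarrier -> hcarrier -> R[i];
  hinner_linl : forall (a : R[i]) (x y z : hcarrier),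
      hinner (a *: x + y) z = a * hinner x z + hinner y z;
  hinner_conj : forall x y : hcarrier, hinner y x = Num.conj (hinner x y);
  hinner_ge0 : forall x : hcarrier, 0 <= hinner x x;
  hinner_eq0 : forall x : hcarrier, hinner x x = 0 -> x = 0;
  hcomplete : forall u : nat -> hcarrier,
      (forall eps : R, 0 < eps -> exists N : nat, forall m n : nat,
         (N <= m)%N -> (N <= n)%N ->
         Num.sqrt (complex.Re (hinner (u m - u n) (u m - u n))) < eps) ->
      exists x : hcarrier, forall eps : R, 0 < eps -> exists N : nat,
         forall n : nat, (N <= n)%N ->
         Num.sqrt (complex.Re (hinner (u n - x) (u n - x))) < eps
}.

Definition hnorm (R : realType) (H : hilbert_space R) (x : H) : R :=
  Num.sqrt (complex.Re (hinner x x)).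

From HB Require Import structures.
From mathcomp Require Import all_boot all_order all_algebra.
From mathcomp Require Import all_classical all_reals all_analysis measurable_realfun.
From mathcomp Require Import complex.
From mathcomp Require Import ring lra.
Set Implicit Arguments. Unset Strict Implicit. Unset Printing Implicit Defensive.
Import Order.TTheory GRing.Theory Num.Theory.
Local Open Scope classical_set_scope.
Local Open Scope ring_scope.

(* For every n, the hypothesis and the invariance of mu give points k_1, ..., k_n
   such that for almost every g the vectors e (g k_i) are pairwise orthogonal.
   By Bessel's inequality, with M a bound for |e x|^2, for such g at most
   M |f|^2 / c of the translates g k_i lie in {x | c <= |<f, e x>|^2};
   integrating over g and using right invariance shows that n times the measure
   of this set is at most M |f|^2 / c for every n, so the set is null.
   Measurability of x |-> <f, e x> is not available for an arbitrary f, so the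
   argument is run on finite combinations w of the e x approximating f
   uniformly in the coefficients. *)

Section ComplexSquaredNorm.
Variable R : realType.
Implicit Types u v z : R[i].

Definition normc2 z : R := complex.Re z ^+ 2 + complex.Im z ^+ 2.

Lemma normc2_ge0 z : 0 <= normc2 z.
Proof. by rewrite addr_ge0 // sqr_ge0. Qed.

Lemma normc2_gt0 z : z != 0 -> 0 < normc2 z.
Proof.
rewrite lt_def normc2_ge0 andbT; apply: contra; case: z => a b.
by rewrite /normc2 /= paddr_eq0 ?sqr_ge0 // !sqrf_eq0 => /andP[/eqP-> /eqP->].
Qed.

Lemma normc2N z : normc2 (- z) = normc2 z.
Proof. by case: z => a b; rewrite /normc2 /= !sqrrN. Qed.

Lemma normc2D_le u v : normc2 (u + v) <= 2 * normc2 u + 2 * normc2 v.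
Proof.
case: u v => a b [c d]; rewrite /normc2 /=.
have := sqr_ge0 (a - c); have := sqr_ge0 (b - d); rewrite !expr2; nra.
Qed.

Lemma Re_conjM z : complex.Re (Num.conj z * z) = normc2 z.
Proof. by case: z => a b; rewrite /normc2 /=; ring. Qed.

Lemma Re_mul_conjM u z : complex.Re (u * (Num.conj u * z)) = normc2 u * complex.Re z.
Proof. by case: u z => a b [c d]; rewrite /normc2 /=; ring. Qed.

End ComplexSquaredNorm.

Lemma le_mul_of_quadratic_ge0 (R : realFieldType) (M A Q X : R) :
  0 < M -> 0 <= Q -> X <= M * Q ->
  0 <= A - 2 * M^-1 * Q + M^-1 ^+ 2 * X -> Q <= M * A.
Proof.
move=> M0 Q0 XQ h.
have MV0 : 0 <= M^-1 by rewrite invr_ge0 ltW.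
have : M^-1 ^+ 2 * X <= M^-1 * Q.
  rewrite (le_trans (ler_wpM2l (exprn_ge0 2 MV0) XQ)) //.
  by rewrite expr2 -mulrA mulKf ?gt_eqF.
move=> hX; have hA : M^-1 * Q <= A by lra.
by have := ler_wpM2l (ltW M0) hA; rewrite mulVKf ?gt_eqF.
Qed.

Section InnerProduct.
Variables (R : realType) (H : hilbert_space R).
Implicit Types x y z : H.

Definition hnorm2 x : R := complex.Re (hinner x x).

Lemma hinnerDl x y z : hinner (x + y) z = hinner x z + hinner y z.
Proof. by have := hinner_linl 1 x y z; rewrite scale1r mul1r. Qed.

Lemma hinner0l z : hinner 0 z = 0.
Proof.
by have /eqP := hinnerDl 0 0 z; rewrite addr0 -subr_eq subrr eq_sym => /eqP.
Qed.

Lemma hinnerZl a x z : hinner (a *: x) z = a * hinner x z.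
Proof. by have := hinner_linl a x 0 z; rewrite !addr0 hinner0l addr0. Qed.

Lemma hinnerBl x y z : hinner (x - y) z = hinner x z - hinner y z.
Proof. by rewrite hinnerDl -scaleN1r hinnerZl mulN1r. Qed.

Lemma hinner_suml I (r : seq I) (P : pred I) (F : I -> H) z :
  hinner (\sum_(i <- r | P i) F i) z = \sum_(i <- r | P i) hinner (F i) z.
Proof. by elim/big_rec2: _ => [|i a b _ <-]; rewrite ?hinner0l ?hinnerDl. Qed.

Lemma hinnerZr a x z : hinner z (a *: x) = Num.conj a * hinner z x.
Proof. by rewrite hinner_conj hinnerZl rmorphM /= -hinner_conj. Qed.

Lemma hinnerBr x y z : hinner z (x - y) = hinner z x - hinner z y.
Proof. by rewrite hinner_conj hinnerBl rmorphB /= -!hinner_conj. Qed.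

Lemma hinner_sumr I (r : seq I) (P : pred I) (F : I -> H) z :
  hinner z (\sum_(i <- r | P i) F i) = \sum_(i <- r | P i) hinner z (F i).
Proof.
rewrite hinner_conj hinner_suml rmorph_sum.
by apply: eq_bigr => i _; exact/esym/hinner_conj.
Qed.

Lemma hnorm2_ge0 x : 0 <= hnorm2 x.
Proof. by have := hinner_ge0 x; rewrite /hnorm2 lecE => /andP[]. Qed.

Lemma hnorm2_scale a x : hnorm2 (a *: x) = normc2 a * hnorm2 x.
Proof. by rewrite /hnorm2 hinnerZl hinnerZr Re_mul_conjM. Qed.

Lemma hnorm2_subZ x y (t : R) :
  hnorm2 (x - t%:C%C *: y) = hnorm2 x - 2 * t * complex.Re (hinner x y) + t ^+ 2 * hnorm2 y.
Proof.
rewrite /hnorm2 hinnerBl !hinnerBr !hinnerZl !hinnerZr (hinner_conj x y).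
case: (hinner x x) (hinner x y) (hinner y y) => a b [c d] [g h] /=; ring.
Qed.

Lemma bessel_orthogonal n (v : 'I_n -> H) (f : H) (M : R) : 0 < M ->
  (forall i, hnorm2 (v i) <= M) ->
  (forall i j, i != j -> hinner (v i) (v j) = 0) ->
  \sum_i normc2 (hinner f (v i)) <= M * hnorm2 f.
Proof.
move=> M0 vM orth; pose c i := hinner f (v i); pose S := \sum_i c i *: v i.
have Re_fS : complex.Re (hinner f S) = \sum_i normc2 (c i).
  rewrite hinner_sumr raddf_sum; apply: eq_bigr => i _.
  by rewrite hinnerZr; exact: Re_conjM.
have hnorm2S : hnorm2 S <= M * \sum_i normc2 (c i).
  rewrite /hnorm2 {1}/S hinner_suml raddf_sum mulr_sumr; apply: ler_sum => i _.
  rewrite hinnerZl /S hinner_sumr (bigD1 i) //= big1 => [|j ji]; last first.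
    by rewrite hinnerZr orth ?mulr0 // eq_sym.
  rewrite addr0 hinnerZr Re_mul_conjM mulrC.
  by apply: ler_wpM2r; [exact: normc2_ge0 | exact: vM].
apply: (le_mul_of_quadratic_ge0 M0 _ hnorm2S).
  by rewrite sumr_ge0 // => i _; exact: normc2_ge0.
by have := hnorm2_ge0 (f - (M^-1)%:C%C *: S); rewrite hnorm2_subZ Re_fS.
Qed.

Definition lincomb (T : Type) (e : T -> H) (s : seq (R[i] * T)) : H :=
  \sum_(p <- s) p.1 *: e p.2.

(* Pick a combination [w] whose distance to [f] is within [eps / M] of the
   infimum; adding the single term [c / M * e g], with [c = <f - w, e g>],
   cannot beat the infimum, which bounds [|c| ^ 2] by [eps]. *)
Lemma lincomb_approx (T : Type) (e : T -> H) (M : R) (f : H) (eps : R) :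
  0 < M -> (forall g, hnorm2 (e g) <= M) -> 0 < eps ->
  exists s, forall g, normc2 (hinner (f - lincomb e s) (e g)) <= eps.
Proof.
move=> M0 eM eps0.
pose D := [set r | exists s, r = hnorm2 (f - lincomb e s)].
have D_lb : has_lbound D by exists 0 => _ [s ->]; exact: hnorm2_ge0.
have D_inf : has_inf D by split => //; exists (hnorm2 (f - lincomb e [::])), [::].
have [_ [s ->] s_inf] := inf_adherent (divr_gt0 eps0 M0) D_inf.
exists s => g; set w := lincomb e s; set c := hinner (f - w) (e g).
have := ge_inf D_lb (ex_intro _ (((M^-1)%:C%C * c, g) :: s) erefl).
have -> : f - lincomb e (((M^-1)%:C%C * c, g) :: s) =
    f - w - (M^-1)%:C%C *: (c *: e g).
  by rewrite /lincomb big_cons /= scalerA opprD addrA addrAC.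
rewrite hnorm2_subZ hinnerZr -/c Re_conjM hnorm2_scale => inf_le.
have : normc2 c <= M * (hnorm2 (f - w) - inf D).
  apply: (le_mul_of_quadratic_ge0 (X := normc2 c * hnorm2 (e g))) => //.
  - exact: normc2_ge0.
  - by rewrite [M * _]mulrC; apply: ler_wpM2l; [exact: normc2_ge0 | exact: eM].
  - lra.
move/le_trans; apply; have : hnorm2 (f - w) - inf D <= eps / M by rewrite /w; lra.
by move=> /(ler_wpM2l (ltW M0)); rewrite mulrCA mulfV ?gt_eqF // mulr1.
Qed.

Lemma hnorm2_le_sqr x (M : R) : hnorm x <= M -> hnorm2 x <= M ^+ 2.
Proof.
move=> xM; rewrite -(sqr_sqrtr (hnorm2_ge0 x)).
by rewrite lerXn2r ?nnegrE ?sqrtr_ge0 ?(le_trans _ xM) //; exact: sqrtr_ge0.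
Qed.

Lemma normr_Re_hinner_le x y : `|complex.Re (hinner x y)| <= hnorm2 x + hnorm2 y.
Proof.
have := hnorm2_ge0 (x - 1%:C%C *: y); have := hnorm2_ge0 (x - (-1)%:C%C *: y).
rewrite !hnorm2_subZ sqrrN expr1n ler_norml => h1 h2.
by apply/andP; split; lra.
Qed.

Lemma normr_Im_hinner_le x y : `|complex.Im (hinner x y)| <= hnorm2 x + hnorm2 y.
Proof.
have -> : complex.Im (hinner x y) = complex.Re (hinner x ('i%C *: y)).
  by rewrite hinnerZr; case: (hinner x y) => a b /=; ring.
have normc2_i : normc2 ('i%C : R[i]) = 1 by rewrite /normc2 /= expr0n expr1n add0r.
by rewrite (le_trans (normr_Re_hinner_le _ _)) // hnorm2_scale normc2_i mul1r.
Qed.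

End InnerProduct.

Section AlmostEverywhere.
Variables (d : measure_display) (T : measurableType d) (R : realType).
Variable mu : probability T R.

Definition measure_preserving (f : T -> T) : Prop :=
  measurable_fun setT f /\ forall A, measurable A -> mu (f @^-1` A) = mu A.

Lemma ae_preserving (f : T -> T) (P : T -> Prop) : measure_preserving f ->
  {ae mu, forall x, P x} -> {ae mu, forall x, P (f x)}.
Proof.
move=> [mf fmu] [N [mN N0 PN]]; exists (f @^-1` N); split => [| |x /= Pfx].
- by rewrite -[f @^-1` N]setTI; exact: mf.
- by rewrite fmu.
- exact: PN.
Qed.

Lemma ae_exists (P : T -> Prop) : {ae mu, forall x, P x} -> exists x, P x.
Proof.
have mu_gt0 : (0 < mu [set: T])%E by rewrite probability_setT lte01.
exact: (filter_ex (FF := ae_properfilter_algebraOfSetsType mu_gt0)).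
Qed.

Lemma count_measure_le n (B : set T) (phi : 'I_n -> T -> T) (K : R) :
  measurable B -> (forall i, measure_preserving (phi i)) ->
  {ae mu, forall x, \sum_i (\1_B (phi i x) : R) <= K} -> n%:R * fine (mu B) <= K.
Proof.
move=> mB phi_pres count_le.
have mphiB i : measurable (phi i @^-1` B).
  by rewrite -[_ @^-1` _]setTI; exact: (phi_pres i).1.
have K0 : 0 <= K.
  have [x le_xK] := ae_exists count_le; apply: le_trans le_xK.
  by apply: sumr_ge0 => i _; rewrite indicE.
have int_count :
    (\int[mu]_x (\sum_i (\1_(phi i @^-1` B) x : R)%:E) = (n%:R * fine (mu B))%:E)%E.
  rewrite ge0_integral_sum //; last by move=> i; exact/measurable_EFinP/measurable_indic.
  have muB : mu B = (fine (mu B))%:E by rewrite fineK // fin_num_measure.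
  rewrite (eq_bigr (fun=> mu B)) => [|i _]; last first.
    by rewrite integral_indic // setIT; exact: (phi_pres i).2.
  by rewrite muB sumEFin sumr_const card_ord mulr_natl.
have : (\int[mu]_x (\sum_i (\1_(phi i @^-1` B) x : R)%:E) <=
    \int[mu]_x (cst K%:E x))%E.
  apply: ae_ge0_le_integral => //.
  - by move=> x _; apply: sume_ge0 => i _; rewrite lee_fin indicE.
  - by apply: emeasurable_sum => i; exact/measurable_EFinP/measurable_indic.
  - by apply: filterS count_le => x; rewrite sumEFin lee_fin.
(* [integral_cst] sees [mu] through the measure coercion, [probability_setT]
   through the probability one: the [/(mu [set: T])] change re-expresses it. *)
rewrite int_count integral_cst // -[X in (_ * X)%E]/(mu [set: T]).
by rewrite probability_setT mule1 lee_fin.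
Qed.

Lemma measure0_of_count_bounded (B : set T) (K : R) : measurable B ->
  (forall n, exists phi : 'I_n -> T -> T, (forall i, measure_preserving (phi i)) /\
     {ae mu, forall x, \sum_i (\1_B (phi i x) : R) <= K}) ->
  mu B = 0.
Proof.
move=> mB counts; have muB : mu B = (fine (mu B))%:E by rewrite fineK // fin_num_measure.
rewrite muB; suff -> : fine (mu B) = 0 by [].
apply/eqP; rewrite eq_le fine_ge0 ?measure_ge0 // andbT leNgt; apply/negP => muB_gt0.
have [phi [phi_pres count_le]] := counts (Num.truncn (K / fine (mu B))).+1.
have := count_measure_le mB phi_pres count_le.
have := truncnS_gt (K / fine (mu B)); rewrite ltr_pdivrMr //.
by move=> /lt_le_trans/[apply]; rewrite ltxx.
Qed.

End AlmostEverywhere.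

Section ProbabilityGroup.
Variables (R : realType) (d : measure_display) (G : measurableType d).
Variables (mul : G -> G -> G) (inv : G -> G) (one : G).
Variables (B2 : set (set (G * G))) (mu : probability G R).
Variable mu2 : probability (g_sigma_algebraType B2) R.
Hypothesis group : is_group mul inv one.
Hypothesis mul_measurable :
  forall A : set G, measurable A -> B2 [set p | A (mul p.1 p.2)].
Hypothesis mull_invariant :
  forall (x : G) (A : set G), measurable A -> mu [set g | A (mul x g)] = mu A.
Hypothesis mulr_invariant :
  forall (x : G) (A : set G), measurable A -> mu [set g | A (mul g x)] = mu A.
Hypothesis fubini : forall f : g_sigma_algebraType B2 -> R,
  measurable_fun setT f -> mu2.-integrable setT (fun p => (f p)%:E) ->
  [/\ forall g : G, measurable_fun setT (fun h : G => f (g, h))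
    & forall g : G, measurable_fun setT (fun h : G => f (h, g))] /\
  [/\ measurable_fun setT (fun g : G => (\int[mu]_h (f (g, h))%:E)%E),
      measurable_fun setT (fun g : G => (\int[mu]_h (f (h, g))%:E)%E),
      (\int[mu]_g (\int[mu]_h (f (g, h))%:E) = \int[mu2]_p (f p)%:E)%E
    & (\int[mu]_g (\int[mu]_h (f (h, g))%:E) = \int[mu2]_p (f p)%:E)%E].

Lemma bounded_sections_measurable (f : g_sigma_algebraType B2 -> R) (K : R) :
  measurable_fun setT f -> (forall p, `|f p| <= K) -> forall g,
  measurable_fun setT (fun h => f (g, h)) /\ measurable_fun setT (fun h => f (h, g)).
Proof.
move=> mf fK g.
have f_int : mu2.-integrable setT (fun p => (f p)%:E).
  apply: measurable_bounded_integrable => //.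
    by rewrite -[X in (X < _)%E]/(mu2 [set: _]) probability_setT ltry.
  exists K; split => [|M KM p _]; [exact: num_real | exact: le_trans (fK p) (ltW KM)].
by have [[]] := fubini mf f_int.
Qed.

Lemma measurable_translations (x : G) :
  measurable_fun setT (mul x) /\ measurable_fun setT (mul^~ x).
Proof.
have sections A : measurable A ->
    measurable [set g | A (mul x g)] /\ measurable [set g | A (mul g x)].
  move=> mA; pose P := [set p : g_sigma_algebraType B2 | A (mul p.1 p.2)].
  have mP : measurable P by apply: sub_sigma_algebra; exact: mul_measurable.
  have P_le1 p : `|(\1_P p : R)| <= 1.
    by rewrite indicE; case: (_ \in _); rewrite ?normr1 ?normr0.
  have [] := bounded_sections_measurable (measurable_indic mP) P_le1 x.
  by split; apply/(measurable_indicP R).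
by split=> _ A mA; rewrite setTI; have [] := sections A mA.
Qed.

Lemma mull_preserving (x : G) : measure_preserving mu (mul x).
Proof. by split; [exact: (measurable_translations x).1 | exact: mull_invariant]. Qed.

Lemma mulr_preserving (x : G) : measure_preserving mu (mul^~ x).
Proof. by split; [exact: (measurable_translations x).2 | exact: mulr_invariant]. Qed.

Lemma mul_invK g a b : mul (mul g a) (mul (inv a) b) = mul g b.
Proof.
case: group => mulA mul1 mulV.
by rewrite -mulA (mulA a) (proj2 (mulV a)) (proj1 (mul1 b)).
Qed.

Lemma exists_separated_points (Q : G -> Prop) : {ae mu, forall h, Q h} ->
  forall n, exists k : nat -> G,
    forall i j, (i < j < n)%N -> Q (mul (inv (k i)) (k j)).
Proof.
move=> aeQ; elim=> [|n [k kQ]]; first by exists (fun=> one) => i j /andP[_].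
have : {ae mu, forall x, forall i, (i < n)%N -> Q (mul (inv (k i)) x)}.
  apply: ae_foralln => i; apply: filterS (ae_preserving (mull_preserving (inv (k i))) aeQ).
  by move=> x Qx _.
move=> /ae_exists[x xQ]; exists (fun i => if i == n then x else k i).
move=> i j /andP[ij jn].
have ni : (i == n) = false by apply/negbTE; rewrite neq_ltn (leq_trans ij) // -ltnS.
rewrite ni; case: eqP => [_|/eqP jn']; first exact: xQ (leq_trans ij _).
by apply: kQ; rewrite ij /= ltn_neqAle jn' -ltnS.
Qed.

Variables (H : hilbert_space R) (e : G -> H) (M : R).
Hypothesis Re_measurable : measurable_fun setT
  (fun p : g_sigma_algebraType B2 => complex.Re (hinner (e p.1) (e p.2))).
Hypothesis Im_measurable : measurable_fun setT
  (fun p : g_sigma_algebraType B2 => complex.Im (hinner (e p.1) (e p.2))).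
Hypothesis M_gt0 : 0 < M.
Hypothesis e_bounded : forall g, hnorm2 (e g) <= M.
Hypothesis ae_orthogonal :
  {ae mu, forall h, {ae mu, forall g, hinner (e g) (e (mul g h)) = 0}}.

Lemma measurable_hinner_e (h : G) :
  measurable_fun setT (fun g => complex.Re (hinner (e h) (e g))) /\
  measurable_fun setT (fun g => complex.Im (hinner (e h) (e g))).
Proof.
have eeM x y : hnorm2 (e x) + hnorm2 (e y) <= M + M by rewrite lerD.
split.
- apply: (bounded_sections_measurable Re_measurable (K := M + M) _ h).1 => p.
  exact: le_trans (normr_Re_hinner_le _ _) (eeM _ _).
- apply: (bounded_sections_measurable Im_measurable (K := M + M) _ h).1 => p.
  exact: le_trans (normr_Im_hinner_le _ _) (eeM _ _).
Qed.

Lemma measurable_normc2_lincomb s :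
  measurable_fun setT (fun g => normc2 (hinner (lincomb e s) (e g))).
Proof.
have hinnerE g : hinner (lincomb e s) (e g) = \sum_(p <- s) p.1 * hinner (e p.2) (e g).
  by rewrite hinner_suml; apply: eq_bigr => p _; rewrite hinnerZl.
have mRe h := (measurable_hinner_e h).1; have mIm h := (measurable_hinner_e h).2.
apply: measurable_funD; apply: measurable_funX.
- rewrite (_ : (fun g => _) = fun g => \sum_(p <- s)
      (complex.Re p.1 * complex.Re (hinner (e p.2) (e g))
       - complex.Im p.1 * complex.Im (hinner (e p.2) (e g)))).
    by apply: measurable_sum => p; apply: measurable_funB; apply: measurable_funM.
  apply/funext => g; rewrite hinnerE raddf_sum; apply: eq_bigr => -[[a b] h] _ /=.
  by case: hinner.
- rewrite (_ : (fun g => _) = fun g => \sum_(p <- s)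
      (complex.Re p.1 * complex.Im (hinner (e p.2) (e g))
       + complex.Im p.1 * complex.Re (hinner (e p.2) (e g)))).
    by apply: measurable_sum => p; apply: measurable_funD; apply: measurable_funM.
  apply/funext => g; rewrite hinnerE raddf_sum; apply: eq_bigr => -[[a b] h] _ /=.
  by case: hinner.
Qed.

Lemma ae_bessel_translates (f : H) n : exists k : nat -> G,
  {ae mu, forall g, \sum_(i < n) normc2 (hinner f (e (mul g (k i)))) <= M * hnorm2 f}.
Proof.
have [k kQ] := exists_separated_points ae_orthogonal n; exists k.
have : {ae mu, forall g, forall i j, (i < j < n)%N ->
    hinner (e (mul g (k i))) (e (mul g (k j))) = 0}.
  apply: ae_foralln => i; apply: ae_foralln => j.
  have [ijn|] := boolP (i < j < n)%N; last by move=> nijn; apply: aeW => g /negP.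
  apply: filterS (ae_preserving (mulr_preserving (k i)) (kQ i j ijn)) => g.
  by rewrite mul_invK => orth _.
move=> /filterS; apply => g orth; apply: bessel_orthogonal => // i j.
have [ij _|ji _|/val_inj->] := ltngtP i j; last by rewrite eqxx.
- by rewrite orth // ij ltn_ord.
- by rewrite hinner_conj orth ?rmorph0 // ji ltn_ord.
Qed.

Lemma measure0_large_coefficients (f : H) (B : set G) (c : R) :
  measurable B -> 0 < c -> (forall x, B x -> c <= normc2 (hinner f (e x))) ->
  mu B = 0.
Proof.
move=> mB c_gt0 Bc.
apply: (measure0_of_count_bounded (K := M * hnorm2 f / c) mB) => n.
have [k bessel] := ae_bessel_translates f n.
exists (fun i => mul^~ (k i)); split => [i|]; first exact: mulr_preserving.
apply: filterS bessel => g bessel_g; rewrite ler_pdivlMr // mulr_suml.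
apply: le_trans bessel_g; apply: ler_sum => i _.
rewrite indicE; case: (boolP (_ \in B)) => [/set_mem/Bc|_].
  by rewrite mul1r.
by rewrite mul0r normc2_ge0.
Qed.

Lemma ae_small_coefficients (f : H) (r : R) : 0 < r ->
  {ae mu, forall g, normc2 (hinner f (e g)) <= r}.
Proof.
move=> r_gt0.
have [s s_approx] := lincomb_approx f M_gt0 e_bounded (divr_gt0 r_gt0 (ltr0n _ 16)).
set w := lincomb e s.
have splitE x : hinner f (e x) = hinner (f - w) (e x) + hinner w (e x).
  by rewrite hinnerBl subrK.
pose B := [set x | r / 4 < normc2 (hinner w (e x))].
have mB : measurable B.
  rewrite /B -preimage_itvoy -[X in measurable X]setTI.
  exact: measurable_normc2_lincomb.
have B0 : mu B = 0.
  apply: (measure0_large_coefficients (c := r / 16) mB) => [|x Bx].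
    by rewrite divr_gt0.
  have := normc2D_le (hinner f (e x)) (- hinner (f - w) (e x)).
  rewrite normc2N {1}splitE addrAC subrr add0r.
  by have := s_approx x; rewrite /B /= in Bx; lra.
exists B; split => // x /= not_small.
apply: contrapT => /negP; rewrite -leNgt => w_small.
apply: not_small; have := normc2D_le (hinner (f - w) (e x)) (hinner w (e x)).
by rewrite -splitE; have := s_approx x; lra.
Qed.

Lemma ae_hinner_eq0 (f : H) : {ae mu, forall g, hinner f (e g) = 0}.
Proof.
have small m : {ae mu, forall g, normc2 (hinner f (e g)) <= m.+1%:R^-1}.
  by apply: ae_small_coefficients; rewrite invr_gt0.
apply: filterS (ae_foralln small) => g small_g; apply/eqP; apply: contraT => nz.
have := small_g (Num.truncn (normc2 (hinner f (e g)))^-1).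
by rewrite leNgt invf_plt ?posrE ?ltr0n ?normc2_gt0 // truncnS_gt.
Qed.

End ProbabilityGroup.

Theorem mainTheorem7 (R : realType) (d : measure_display) (G : measurableType d)
  (mul : G -> G -> G) (inv : G -> G) (one : G)
  (B2 : set (set (G * G)))
  (mu : probability G R) (mu2 : probability (g_sigma_algebraType B2) R)
  (H : hilbert_space R) (e : G -> H) :
  (* G is a group *)
  is_group mul inv one ->
  (* G is infinite *)
  ~ finite_set [set: G] ->
  (* B2 is a sigma-algebra on G^2 containing the product sigma-algebra B x B *)
  sigma_algebra setT B2 ->
  (forall A : set (G * G), measurable A -> B2 A) ->
  (* mu2 restricted to B x B is the product measure mu x mu *)
  (forall A : set (G * G), measurable A -> mu2 A = (mu \x mu)%E A) ->
  (* (i) multiplication (G^2, B2) -> (G, B) is measurable *)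
  (forall A : set G, measurable A -> B2 [set p | A (mul p.1 p.2)]) ->
  (* (ii) inversion is measurable *)
  measurable_fun setT inv ->
  (* (iii) invariance of mu under left/right translations and inversion *)
  (forall (x : G) (A : set G), measurable A -> mu [set g | A (mul x g)] = mu A) ->
  (forall (x : G) (A : set G), measurable A -> mu [set g | A (mul g x)] = mu A) ->
  (forall A : set G, measurable A -> mu [set g | A (inv g)] = mu A) ->
  (* (iv) Fubini's theorem for (mu2-integrable) B2-measurable functions *)
  (forall f : g_sigma_algebraType B2 -> R,
     measurable_fun setT f -> mu2.-integrable setT (fun p => (f p)%:E) ->
     [/\ forall g : G, measurable_fun setT (fun h : G => f (g, h))
       & forall g : G, measurable_fun setT (fun h : G => f (h, g))] /\
     [/\ measurable_fun setT (fun g : G => (\int[mu]_h (f (g, h))%:E)%E),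
         measurable_fun setT (fun g : G => (\int[mu]_h (f (h, g))%:E)%E),
         (\int[mu]_g (\int[mu]_h (f (g, h))%:E) = \int[mu2]_p (f p)%:E)%E
       & (\int[mu]_g (\int[mu]_h (f (h, g))%:E) = \int[mu2]_p (f p)%:E)%E]) ->
  (* (e_g) is norm-bounded *)
  (exists M : R, forall g : G, hnorm (e g) <= M) ->
  (* (g,h) |-> <e_g, e_h> is B2-measurable (real and imaginary parts) *)
  measurable_fun setT
    (fun p : g_sigma_algebraType B2 => complex.Re (hinner (e p.1) (e p.2))) ->
  measurable_fun setT
    (fun p : g_sigma_algebraType B2 => complex.Im (hinner (e p.1) (e p.2))) ->
  (* for a.e. h, for a.e. g, <e_g, e_{gh}> = 0 *)
  {ae mu, forall h : G, {ae mu, forall g : G, hinner (e g) (e (mul g h)) = 0}} ->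
  forall f : H, {ae mu, forall g : G, hinner f (e g) = 0}.
Proof.
move=> group _ _ _ _ mul_meas _ mull_inv mulr_inv _ fubini [M e_le_M] mRe mIm ae_orth f.
have e_bounded g : hnorm2 (e g) <= M ^+ 2 + 1.
  by rewrite (le_trans (hnorm2_le_sqr (e_le_M g))) // lerDl.
apply: (ae_hinner_eq0 group mul_meas mull_inv mulr_inv fubini mRe mIm _ e_bounded ae_orth).
by rewrite ltr_wpDl ?sqr_ge0.
Qed.
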